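(* Let $\mathcal M$ be a time-dependent finite-horizon MDP accessed through a quantum generative model $\mathcal G$, and let $\epsilon\in(0,\sqrt H]$ and $\delta\in(0,1)$. Run the algorithm QVI-4$(\mathcal M,\epsilon,\delta)$ described in the context. Then, with probability at least $1-\delta$, its outputs satisfy, for all $h\in[H]$ (componentwise), $V_h^*-\epsilon\le\hat V_h\le V_h^{\hat\pi}\le V_h^*$ and $Q_h^*-\epsilon\le\hat Q_h\le Q_h^{\hat\pi}\le Q_h^*$.
   Context: Write $[H]=\{0,\dots,H-1\}$. The MDP $\mathcal M=(\mathcal S,\mathcal A,\{P_h\},\{r_h\},H)$ has finite $\mathcal S,\mathcal A$ with $S=|\mathcal S|$ and $A=|\mathcal A|$, known rewards $r_h(s,a)\in[0,1]$, and transitions $P_h(\cdot\mid s,a)$. Write $P_{h|s,a}=(P_h(s'\mid s,a))_{s'}$. A policy is $\pi:\mathcal S\times[H]\to\mathcal A$. Value functions: - $V_h^\pi(s)=\mathbb E[\sum_{t=h}^{H-1}r_t(s_t,a_t)\mid s_h=s]$, with $a_t=\pi(s_t,t)$ and $s_{t+1}\sim P_t(\cdot\mid s_t,a_t)$. - $Q_h^\pi(s,a)$ is defined the same way but with $a_h=a$, so $Q_h^\pi(s,a)=r_h(s,a)+P_{h|s,a}^{\mathrm T}V^\pi_{h+1}$, with $V_H^\pi=0$. - $V_h^*=\max_\pi V_h^\pi$ and $Q_h^*=\max_\pi Q_h^\pi$. The quantum generative model is the unitary $\mathcal G:|s\rangle|a\rangle|h\rangle|0\rangle|0\rangle\mapsto|s\rangle|a\rangle|h\rangle\sum_{s'}\sqrt{P_h(s'\mid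 s,a)}|s'\rangle|j_{s'}\rangle$, with arbitrary auxiliary states $|j_{s'}\rangle$. Subroutines (both estimate $p^{\mathrm T}f$, given $U_p:|0\rangle|0\rangle\mapsto\sum_x\sqrt{p_x}|x\rangle|j_x\rangle$, here $\mathcal G$ at $(s,a,h)$, and a binary oracle for $f$): - QME1$_\zeta(p^{\mathrm T}f,\eta)$: assumes $0\le f\le u$ for a supplied $u$. Returns an estimate with error less than $\eta$ with probability greater than $1-\zeta$, using $O((u/\eta+\sqrt{u/\eta})\log(1/\zeta))$ queries. - QME2$_\zeta(p^{\mathrm T}f,\eta)$: assumes $\mathrm{Var}_{x\sim p}f(x)\le\sigma^2$ for a supplied $\sigma$ with $\eta\in(0,4\sigma)$. Returns an estimate with error less than $\eta$ with probability greater than $1-\zeta$, using $O((\sigma/\eta)\log^2(\sigma/\eta)\log(1/\zeta))$ queries. Algorithm QVI-4$(\mathcal M,\epsilon,\delta)$: - Set $K=\lceil\log_2(H/\epsilon)\rceil+1$, $\zeta=\delta/(4KHSA)$, $c=0.001$, $b=1$. - Set $V^{(0)}_{0,h}=\mathbf 0$ for all $h$, and let $\pi^{(0)}_0(s,h)$ be arbitrary actions. - For $k=0,\dots,K-1$: - Set $\epsilon_k=H/2^k$, $V_{k,H}=\mathbf 0$, $V^{(0)}_{k,H}=\mathbf 0$. - For all $(s,a,h)$: set $y_{k,h}(s,a)=\max\{\mathrm{QME1}_\zeta(P_{h|s,a}^{\mathrm T}(V^{(0)}_{k,h+1})^2,b)-(\mathrm{QME1}_\zeta(P_{h|s,a}^{\mathrm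 T}V^{(0)}_{k,h+1},b/H))^2,\,0\}$, with range bounds $u=H^2$ and $u=H$ respectively. - For all $(s,a,h)$: with $\eta_{k,h}(s,a)=c\epsilon H^{-1.5}\sqrt{y_{k,h}(s,a)+4b}$, set $x_{k,h}(s,a)=\mathrm{QME2}_\zeta(P_{h|s,a}^{\mathrm T}V^{(0)}_{k,h+1},\eta_{k,h}(s,a))-\eta_{k,h}(s,a)$, with variance bound $\sigma^2=y_{k,h}(s,a)+4b$. - For $h=H-1,\dots,0$: - For all $(s,a)$: set $g_{k,h}(s,a)=\mathrm{QME1}_\zeta(P_{h|s,a}^{\mathrm T}(V_{k,h+1}-V^{(0)}_{k,h+1}),c\epsilon_k/H)-c\epsilon_k/H$, with $u=2\epsilon_k$. - Set $Q_{k,h}(s,a)=\max\{r_h(s,a)+x_{k,h}(s,a)+g_{k,h}(s,a),0\}$. - Set $V_{k,h}(s)=\max_aQ_{k,h}(s,a)$ and $\pi_k(s,h)=\arg\max_aQ_{k,h}(s,a)$. - If $\max_aQ_{k,h}(s,a)\le V^{(0)}_{k,h}(s)$, reset $V_{k,h}(s)=V^{(0)}_{k,h}(s)$ and $\pi_k(s,h)=\pi^{(0)}_k(s,h)$. - Set $V^{(0)}_{k+1,h}=V_{k,h}$ and $\pi^{(0)}_{k+1}(\cdot,h)=\pi_k(\cdot,h)$ for all $h$. - Return $\hat\pi=\pi_{K-1}$, $\hat V_h=V_{K-1,h}$, $\hat Q_h=Q_{K-1,h}$. *)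

From HB Require Import structures.
From mathcomp Require Import all_boot all_order all_algebra.
From mathcomp Require Import all_classical all_reals all_analysis.
Set Implicit Arguments. Unset Strict Implicit. Unset Printing Implicit Defensive.
Import Order.TTheory GRing.Theory Num.Theory.
Local Open Scope ring_scope.

(* Finitely supported probability distributions (finite-outcome         *)
(* randomised procedures), as weighted lists (weight, outcome).         *)
Section Dist.
Variable R : realType.

Definition dist (X : Type) := seq (R * X).
Definition dret (X : Type) (x : X) : dist X := [:: (1, x)].
Definition dbind (X Y : Type) (d : dist X) (f : X -> dist Y) : dist Y :=
  flatten [seq [seq (p.1 * q.1, q.2) | q <- f p.2] | p <- d].
Definition prob (X : Type) (d : dist X) (E : X -> bool) : R :=
  \sum_(p <- d | E p.2) p.1.
Definition dvalid (X : Type) (d : dist X) : bool :=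
  all (fun p => 0 <= p.1) d && (\sum_(p <- d) p.1 == 1).

(* independent draws, one for each index of a finite type *)
Definition drawall (I : finType) (f : I -> dist R) : dist (I -> R) :=
  foldr (fun i acc => dbind (f i) (fun v =>
           dbind acc (fun g => dret (fun j => if j == i then v else g j))))
        (dret (fun _ => 0)) (enum I).
End Dist.
Arguments dret {R X}.
Arguments dbind {R X Y}.
Arguments prob {R X}.
Arguments dvalid {R X}.
Arguments drawall {R I}.

(* The MDP, value functions.  Time steps are natural numbers; only     *)
Section MDP.
Variables (R : realType) (S A : finType) (H : nat).
Variable P : nat -> S -> A -> S -> R.   (* P h s a s' = P_h(s'|s,a) *)
Variable r : nat -> S -> A -> R.

Definition policy := {ffun 'I_H -> {ffun S -> A}}.

Definition Pmean (h : nat) (s : S) (a : A) (f : S -> R) : R :=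
  \sum_(s' : S) P h s a s' * f s'.
Definition Pvar (h : nat) (s : S) (a : A) (f : S -> R) : R :=
  Pmean h s a (fun s' => f s' ^+ 2) - (Pmean h s a f) ^+ 2.

(* backward (Bellman) evaluation; m = H - h steps remaining *)
Fixpoint Vfuel (pi : policy) (m h : nat) (s : S) : R :=
  match m with
  | 0 => 0
  | m'.+1 =>
    match (insub h : option 'I_H) with
    | Some i => r h s (pi i s) + Pmean h s (pi i s) (Vfuel pi m' h.+1)
    | None => 0
    end
  end.

Definition Vpi (pi : policy) (h : nat) (s : S) : R := Vfuel pi (H - h) h s.
Definition Qpi (pi : policy) (h : nat) (s : S) (a : A) : R :=
  r h s a + Pmean h s a (Vpi pi h.+1).

(* V*_h = max_pi V^pi_h, Q*_h = max_pi Q^pi_h (all values are >= 0) *)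
Definition Vstar (h : nat) (s : S) : R := \big[Num.max/0]_(pi : policy) Vpi pi h s.
Definition Qstar (h : nat) (s : S) (a : A) : R :=
  \big[Num.max/0]_(pi : policy) Qpi pi h s a.

(* Abstract quantum mean estimators (finite-outcome randomised         *)
(* procedures).  est1 s a h f u eta zeta = output distribution of       *)
(* QME1_zeta(P_{h|s,a}^T f, eta) with range bound u;                    *)
(* est2 s a h f sigma eta zeta = output distribution of                 *)
(* QME2_zeta(P_{h|s,a}^T f, eta) with variance bound sigma^2.           *)
Definition QME1_spec
  (est1 : S -> A -> nat -> (S -> R) -> R -> R -> R -> dist R R) : Prop :=
  (forall s a h f u eta zeta, dvalid (est1 s a h f u eta zeta)) /\
  (forall s a h f u eta zeta, (h < H)%N ->
     (forall s', 0 <= f s' <= u) -> 0 < eta -> 0 < zeta < 1 ->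
     1 - zeta < prob (est1 s a h f u eta zeta)
                     (fun v => `|v - Pmean h s a f| < eta)).

Definition QME2_spec
  (est2 : S -> A -> nat -> (S -> R) -> R -> R -> R -> dist R R) : Prop :=
  (forall s a h f sigma eta zeta, dvalid (est2 s a h f sigma eta zeta)) /\
  (forall s a h f sigma eta zeta, (h < H)%N ->
     Pvar h s a f <= sigma ^+ 2 -> 0 < eta < 4 * sigma -> 0 < zeta < 1 ->
     1 - zeta < prob (est2 s a h f sigma eta zeta)
                     (fun v => `|v - Pmean h s a f| < eta)).

Variables (est1 est2 : S -> A -> nat -> (S -> R) -> R -> R -> R -> dist R R).
Variables (eps delta : R).

Definition QVI_K : nat := (`|Num.ceil (ln (H%:R / eps) / ln 2)| + 1)%N.
Definition QVI_zeta : R := delta / (4 * QVI_K * H * #|S| * #|A|)%N%:R.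
Definition QVI_c : R := 1 / 1000.
Definition QVI_b : R := 1.

Definition out_t := (policy * (nat -> S -> R) * (nat -> S -> A -> R))%type.
Definition loop_t := ((nat -> S -> R) * (nat -> S -> A -> R) * ('I_H -> S -> A))%type.

(* iteration k, given V^{(0)}_k = V0 and pi^{(0)}_k = pi0;
   returns (pi_k, V_k, Q_k) *)
Definition QVI_iter (k : nat) (pi0 : policy) (V0 : nat -> S -> R) : dist R out_t :=
  let zeta := QVI_zeta in
  let c := QVI_c in let b := QVI_b in
  let epsk : R := H%:R / 2 ^+ k in
  dbind (drawall (fun i : 'I_H * S * A =>
     let h := i.1.1 in let s := i.1.2 in let a := i.2 in
     dbind (est1 s a h (fun s' => V0 h.+1 s' ^+ 2) (H%:R ^+ 2) b zeta) (fun m2 =>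
     dbind (est1 s a h (V0 h.+1) H%:R (b / H%:R) zeta) (fun m1 =>
     dret (Num.max (m2 - m1 ^+ 2) 0))))) (fun y =>
  let eta i := c * eps / (H%:R * Num.sqrt H%:R) * Num.sqrt (y i + 4 * b) in
  dbind (drawall (fun i : 'I_H * S * A =>
     let h := i.1.1 in let s := i.1.2 in let a := i.2 in
     dbind (est2 s a h (V0 h.+1) (Num.sqrt (y i + 4 * b)) (eta i) zeta) (fun m =>
     dret (m - eta i)))) (fun x =>
  (* backward loop h = H-1, ..., 0 : enum 'I_H is increasing, so the
     innermost (first executed) step of this monadic foldr is h = H-1 *)
  let step (hi : 'I_H) (st : loop_t) : dist R loop_t :=
    let: (V, Q, pi) := st in
    dbind (drawall (fun sa : S * A =>
      dbind (est1 sa.1 sa.2 hi (fun s' => V hi.+1 s' - V0 hi.+1 s')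
                  (2 * epsk) (c * epsk / H%:R) zeta) (fun m =>
      dret (m - c * epsk / H%:R)))) (fun g =>
    let Qh s a := Num.max (r hi s a + x (hi, s, a) + g (s, a)) 0 in
    let mx s := \big[Num.max/0]_(a : A) Qh s a in
    let am s := Order.arg_max (pi0 hi s) xpredT (Qh s) in
    dret ((fun h' s => if h' == hi :> nat then
                         (if mx s <= V0 hi s then V0 hi s else mx s)
                       else V h' s),
          (fun h' s a => if h' == hi :> nat then Qh s a else Q h' s a),
          (fun h' s => if h' == hi then
                         (if mx s <= V0 hi s then pi0 hi s else am s)
                       else pi h' s))) in
  dbind (foldr (fun hi acc => dbind acc (step hi))
               (dret ((fun _ _ => 0), (fun _ _ _ => 0), (fun h s => pi0 h s)))
               (enum 'I_H)) (fun st =>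
  let: (V, Q, pi) := st in
  dret ([ffun h => [ffun s => pi h s]], V, Q)))).

Fixpoint QVI_run (piinit : policy) (k : nat) : dist R out_t :=
  match k with
  | 0 => dret (piinit, (fun _ _ => 0), (fun _ _ _ => 0))
  | k'.+1 => dbind (QVI_run piinit k') (fun o =>
               let: (pi, V, _) := o in QVI_iter k' pi V)
  end.

Definition QVI4 (piinit : policy) : dist R out_t := QVI_run piinit QVI_K.

Definition QVI_good (o : out_t) : bool :=
  let: (hpi, hV, hQ) := o in
  [forall h : 'I_H, [forall s : S,
     (Vstar h s - eps <= hV h s) && (hV h s <= Vpi hpi h s) && (Vpi hpi h s <= Vstar h s)
     && [forall a : A,
       (Qstar h s a - eps <= hQ h s a) && (hQ h s a <= Qpi hpi h s a)
       && (Qpi hpi h s a <= Qstar h s a)]]].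
End MDP.

From HB Require Import structures.
From mathcomp Require Import all_boot all_order all_algebra.
From mathcomp Require Import all_classical all_reals all_analysis.
From mathcomp Require Import ring lra zify.
Set Implicit Arguments. Unset Strict Implicit. Unset Printing Implicit Defensive.
Import Order.TTheory GRing.Theory Num.Theory.
Local Open Scope ring_scope.

(* QVI-4 halves the error eps_k = H / 2^k in each of its K iterations.  On the event that
   all quantum mean estimates of iteration k are accurate, which has probability at least
   1 - 4HSA zeta by a union bound, the backward pass only produces Bellman subsolutions for
   the returned policy, so V_k <= V^{pi_k} <= V*, while V* - V_k and Q* - Q_k are bounded
   by the value, under an optimal policy, of the per-step error 2 eta + 2 c eps_k / H.  The
   accuracy eta is proportional to the square root of the estimated variance of V_{k-1},
   which is at most twice the variance of V* plus 8 eps_k^2 + 8; Cauchy-Schwarz along the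
   trajectory and the law of total variance (the one-step variances of V* add up to at most
   H^2) bound the accumulated error by eps_k.  A union bound over the K iterations leaves
   failure probability at most 4KHSA zeta = delta. *)

Section FiniteDistributions.
Variable R : realType.
Implicit Types X Y : Type.

Lemma prob_dret X (x : X) (E : X -> bool) : prob (dret x : dist R X) E = (E x)%:R.
Proof. by rewrite /prob big_cons big_nil; case: (E x); rewrite ?addr0. Qed.

Lemma prob_dbind X Y (d : dist R X) (f : X -> dist R Y) (E : Y -> bool) :
  prob (dbind d f) E = \sum_(p <- d) p.1 * prob (f p.2) E.
Proof.
rewrite /prob /dbind big_flatten /= big_map; apply: eq_bigr => p _.
rewrite big_map mulr_sumr big_mkcond [RHS]big_mkcond.
by apply: eq_bigr => q _; case: (E q.2); rewrite ?mulr0.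
Qed.

Definition dnneg X (d : dist R X) := all (fun p => 0 <= p.1) d.

Lemma dvalid_nneg X (d : dist R X) : dvalid d -> dnneg d.
Proof. by case/andP. Qed.

Lemma prob_predT X (d : dist R X) : dvalid d -> prob d xpredT = 1.
Proof. by case/andP=> _ /eqP. Qed.

Lemma prob_ge0 X (d : dist R X) E : dnneg d -> 0 <= prob d E.
Proof.
rewrite /prob; elim: d => [|p d IH] /=; first by rewrite big_nil.
by case/andP=> p0 /IH d0; rewrite big_cons; case: (E p.2); rewrite ?addr_ge0.
Qed.

Lemma prob_mono X (d : dist R X) (E E' : X -> bool) :
  dvalid d -> (forall x, E x -> E' x) -> prob d E <= prob d E'.
Proof.
move=> /dvalid_nneg + EE'; rewrite /prob; elim: d => [|p d IH] /=; first by rewrite !big_nil.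
case/andP=> p0 /IH d0; rewrite !big_cons.
case Ep: (E p.2); first by rewrite (EE' _ Ep) lerD2l.
by case: (E' p.2); rewrite // -[X in X <= _]add0r lerD.
Qed.

Lemma prob_le1 X (d : dist R X) E : dvalid d -> prob d E <= 1.
Proof. by move=> dv; rewrite -(prob_predT dv); apply: prob_mono. Qed.

Lemma dvalid_dret X (x : X) : dvalid (dret x : dist R X).
Proof. by rewrite /dvalid /= ler01 big_seq1 /=. Qed.

Lemma dvalid_dbind X Y (d : dist R X) (f : X -> dist R Y) :
  dvalid d -> (forall x, dvalid (f x)) -> dvalid (dbind d f).
Proof.
move=> dv fv; apply/andP; split.
  move: (dvalid_nneg dv); rewrite /dnneg /dbind; elim: d {dv} => [|p d IH] //=.
  case/andP=> p0 /IH d0; rewrite all_cat d0 andbT all_map.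
  move: (dvalid_nneg (fv p.2)); rewrite /dnneg; elim: (f p.2) => [|q l IHl] //=.
  by case/andP=> q0 /IHl ->; rewrite andbT mulr_ge0.
apply/eqP; have := prob_dbind d f xpredT; rewrite /prob => ->.
rewrite -[RHS](prob_predT dv); apply: eq_bigr => p _.
by have := prob_predT (fv p.2); rewrite /prob => ->; rewrite mulr1.
Qed.

(* Failure probabilities add up along a bind: a union bound. *)
Lemma prob_dbind_ge X Y (d : dist R X) (f : X -> dist R Y)
    (G : X -> bool) (E : Y -> bool) (e1 e2 : R) :
  dvalid d -> (forall x, dvalid (f x)) -> 0 <= e2 ->
  1 - e1 <= prob d G -> (forall x, G x -> 1 - e2 <= prob (f x) E) ->
  1 - (e1 + e2) <= prob (dbind d f) E.
Proof.
move=> dv fv e2_ge0 dG fE; rewrite prob_dbind.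
have lower : (1 - e2) * prob d G <= \sum_(p <- d) p.1 * prob (f p.2) E.
  have := dvalid_nneg dv; rewrite /prob mulr_sumr big_mkcond.
  elim: d {dv dG} => [|p d IH] /=; first by rewrite !big_nil.
  case/andP=> p0 /IH {}IH; rewrite !big_cons; apply: lerD => //.
  case Gp: (G p.2); first by rewrite mulrC ler_wpM2l // fE.
  by rewrite mulr_ge0 // prob_ge0 // dvalid_nneg.
apply: le_trans lower; have := prob_le1 G dv; have := prob_ge0 G (dvalid_nneg dv).
move: dG; set q := prob d G => dG q0 q1.
have : e2 * q <= e2 by rewrite ler_piMr.
lra.
Qed.

Lemma prob_dbind_dret_ge X Y (d : dist R X) (f : X -> Y)
    (G : X -> bool) (E : Y -> bool) (e : R) :
  dvalid d -> 1 - e <= prob d G -> (forall x, G x -> E (f x)) ->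
  1 - e <= prob (dbind d (fun x => dret (f x))) E.
Proof.
move=> dv dG GE; rewrite -[e]addr0; apply: (prob_dbind_ge (G := G)) => //.
  by move=> x; apply: dvalid_dret.
by move=> x /GE Efx; rewrite prob_dret Efx subr0.
Qed.

Lemma prob_shift_under (d : dist R R) (mu t z : R) :
  dvalid d -> 1 - z < prob d (fun v => `|v - mu| < t) ->
  1 - z <= prob (dbind d (fun m => dret (m - t))) (fun v => mu - 2 * t <= v <= mu).
Proof.
move=> dv /ltW dz; apply: (prob_dbind_dret_ge (G := fun v => `|v - mu| < t)) => // m.
rewrite ltr_norml => /andP[? ?]; apply/andP; split; lra.
Qed.

Section Draws.
Variables (I : finType) (f : I -> dist R R).

Definition drawseq (s : seq I) : dist R (I -> R) :=
  foldr (fun i acc => dbind (f i) (fun v =>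
           dbind acc (fun g => dret (fun j => if j == i then v else g j))))
        (dret (fun _ => 0)) s.

Hypothesis f_valid : forall i, dvalid (f i).

Lemma dvalid_drawseq s : dvalid (drawseq s).
Proof.
elim: s => [|i s IH] /=; first exact: dvalid_dret.
by apply: dvalid_dbind => // v; apply: dvalid_dbind => // g; apply: dvalid_dret.
Qed.

Lemma prob_drawseq_ge (E : I -> R -> bool) (e : R) s :
  0 <= e -> (forall i, 1 - e <= prob (f i) (E i)) ->
  1 - (size s)%:R * e <= prob (drawseq s) (fun g => all (fun j => E j (g j)) s).
Proof.
move=> e0 fE; elim: s => [|i s IH] /=; first by rewrite prob_dret mul0r subr0.
rewrite -add1n natrD mulrDl mul1r.
apply: (prob_dbind_ge (G := E i)) => //.
- by move=> v; apply: dvalid_dbind => [|g]; [apply: dvalid_drawseq | apply: dvalid_dret].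
- by rewrite mulr_ge0.
move=> v Eiv; apply: prob_dbind_dret_ge IH _ => [|g /allP Eg /=]; first exact: dvalid_drawseq.
by rewrite eqxx Eiv; apply/allP => j js; case: eqP => [->|_] //; apply: Eg.
Qed.

Lemma dvalid_drawall : dvalid (drawall f).
Proof. exact: dvalid_drawseq. Qed.

Lemma prob_drawall_ge (E : I -> R -> bool) (e : R) :
  0 <= e -> (forall i, 1 - e <= prob (f i) (E i)) ->
  1 - #|I|%:R * e <= prob (drawall f) (fun g => [forall i, E i (g i)]).
Proof.
move=> e0 fE; rewrite cardE; apply: le_trans (prob_drawseq_ge (enum I) e0 fE) _.
apply: prob_mono => [|g /allP Eg]; first exact: dvalid_drawseq.
by apply/forallP => i; apply: Eg; rewrite mem_enum.
Qed.

End Draws.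

End FiniteDistributions.

Lemma sqrt_add_le_weighted (R : realType) (a b m : R) : 0 <= a -> 0 <= b -> 0 <= m ->
  Num.sqrt a + Num.sqrt (m * b) <= Num.sqrt ((1 + m) * (a + b)).
Proof.
move=> a0 b0 m0; rewrite sqrtrM //.
have := sqr_sqrtr a0; have := sqr_sqrtr b0; have := sqr_sqrtr m0.
have := sqrtr_ge0 a; have := sqrtr_ge0 b; have := sqrtr_ge0 m.
move: (Num.sqrt a) (Num.sqrt b) (Num.sqrt m) => u v w w0 v0 u0 <- <- <-.
rewrite -[X in X <= _]ger0_norm ?addr_ge0 ?mulr_ge0 // -sqrtr_sqr ler_wsqrtr //.
have : 0 <= (w * u - v) ^+ 2 by apply: sqr_ge0.
nra.
Qed.

Section MDPTheory.
Variables (R : realType) (S A : finType) (H : nat) (P : nat -> S -> A -> S -> R).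

Lemma backward_ind (Pr : nat -> Prop) :
  (forall h, (H <= h)%N -> Pr h) -> (forall i : 'I_H, Pr i.+1 -> Pr i) ->
  forall h, Pr h.
Proof.
move=> PrH PrS h; move Ed: (H - h)%N => d; elim: d h Ed => [|d IH] h Ed.
  by apply: PrH; rewrite -subn_eq0 Ed.
have hH : (h < H)%N by rewrite -subn_gt0 Ed.
by apply: (PrS (Ordinal hH)); apply: IH; rewrite /= subnS Ed.
Qed.

Hypothesis P_ge0 : forall h s a s', (h < H)%N -> 0 <= P h s a s'.
Hypothesis P_sum1 : forall h s a, (h < H)%N -> \sum_(s' : S) P h s a s' = 1.

Section Expectation.
Context {h : nat} {s : S} {a : A}.
Local Notation PM := (Pmean P h s a).

Lemma PmeanD (f g : S -> R) : PM (fun x => f x + g x) = PM f + PM g.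
Proof. by rewrite /Pmean -big_split; apply: eq_bigr => x _; rewrite mulrDr. Qed.

Lemma PmeanB (f g : S -> R) : PM (fun x => f x - g x) = PM f - PM g.
Proof. by rewrite /Pmean -sumrB; apply: eq_bigr => x _; rewrite mulrBr. Qed.

Lemma PmeanZ c (f : S -> R) : PM (fun x => c * f x) = c * PM f.
Proof. by rewrite /Pmean mulr_sumr; apply: eq_bigr => x _; rewrite mulrCA. Qed.

Lemma eq_Pmean (f g : S -> R) : f =1 g -> PM f = PM g.
Proof. by move=> fg; rewrite /Pmean; apply: eq_bigr => x _; rewrite fg. Qed.

Hypothesis hH : (h < H)%N.

Lemma Pmean_cst c : PM (fun _ => c) = c.
Proof. by rewrite /Pmean -mulr_suml P_sum1 // mul1r. Qed.

Lemma ler_Pmean (f g : S -> R) : (forall x, f x <= g x) -> PM f <= PM g.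
Proof. by move=> fg; apply: ler_sum => x _; apply: ler_wpM2l; rewrite ?P_ge0. Qed.

Lemma Pmean_ge0 (f : S -> R) : (forall x, 0 <= f x) -> 0 <= PM f.
Proof. by move=> f0; rewrite -(Pmean_cst 0); apply: ler_Pmean. Qed.

Lemma Pmean_le_cst (f : S -> R) c : (forall x, f x <= c) -> PM f <= c.
Proof. by move=> fc; rewrite -(Pmean_cst c); apply: ler_Pmean. Qed.

Lemma PvarE (f : S -> R) : Pvar P h s a f = PM (fun x => (f x - PM f) ^+ 2).
Proof.
rewrite /Pvar [RHS](@eq_Pmean _ (fun x => f x ^+ 2 + (- (2 * PM f)) * f x + PM f ^+ 2)).
  by rewrite !PmeanD PmeanZ Pmean_cst; ring.
by move=> x; ring.
Qed.

Lemma Pvar_ge0 (f : S -> R) : 0 <= Pvar P h s a f.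
Proof. by rewrite PvarE; apply: Pmean_ge0 => x; apply: sqr_ge0. Qed.

Lemma Pvar_le_Pmean_sqr (f : S -> R) : Pvar P h s a f <= PM (fun x => f x ^+ 2).
Proof. by rewrite /Pvar lerBlDr lerDl sqr_ge0. Qed.

Lemma Pvar_le_split (f g : S -> R) :
  Pvar P h s a f <= 2 * Pvar P h s a g + 2 * Pvar P h s a (fun x => f x - g x).
Proof.
rewrite !PvarE -!PmeanZ -PmeanD; apply: ler_Pmean => x; rewrite PmeanB.
set u := g x - PM g; set v := f x - g x - (PM f - PM g).
have -> : f x - PM f = u + v by rewrite /u /v; ring.
have : 0 <= (u - v) ^+ 2 by apply: sqr_ge0.
nra.
Qed.

Lemma Pmean_sqrt_le (f : S -> R) : (forall x, 0 <= f x) ->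
  PM (fun x => Num.sqrt (f x)) <= Num.sqrt (PM f).
Proof.
move=> f0; have m0 : 0 <= PM (fun x => Num.sqrt (f x)).
  by apply: Pmean_ge0 => x; apply: sqrtr_ge0.
rewrite -[X in X <= _]ger0_norm // -sqrtr_sqr ler_wsqrtr //.
have := Pvar_ge0 (fun x => Num.sqrt (f x)); rewrite /Pvar subr_ge0.
by rewrite (@eq_Pmean (fun x => Num.sqrt (f x) ^+ 2) f) // => x; rewrite sqr_sqrtr.
Qed.

End Expectation.

Lemma natr_sub_ordS (i : 'I_H) : ((H - i)%:R : R) = (H - i.+1)%:R + 1.
Proof. by rewrite -subnSK // -addn1 natrD. Qed.

Section PolicyValue.
Variable pi : policy S A H.

Lemma VpiE rw (i : 'I_H) s : Vpi P rw pi i s = Qpi P rw pi i s (pi i s).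
Proof. by rewrite /Vpi -subnSK //= valK. Qed.

Lemma Vpi_beyond rw h s : (H <= h)%N -> Vpi P rw pi h s = 0.
Proof. by rewrite /Vpi -subn_eq0 => /eqP ->. Qed.

Lemma Vpi_mono rw1 rw2 : (forall h s a, (h < H)%N -> rw1 h s a <= rw2 h s a) ->
  forall h s, Vpi P rw1 pi h s <= Vpi P rw2 pi h s.
Proof.
move=> r12; apply: backward_ind => [h hH s|i IH s]; first by rewrite !Vpi_beyond.
by rewrite !VpiE lerD ?r12 ?ler_Pmean.
Qed.

Lemma Qpi_mono rw1 rw2 : (forall h s a, (h < H)%N -> rw1 h s a <= rw2 h s a) ->
  forall (i : 'I_H) s a, Qpi P rw1 pi i s a <= Qpi P rw2 pi i s a.
Proof. by move=> r12 i s a; rewrite lerD ?r12 ?ler_Pmean // => x; apply: Vpi_mono. Qed.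

Lemma Vpi_ge0 rw : (forall h s a, (h < H)%N -> 0 <= rw h s a) ->
  forall h s, 0 <= Vpi P rw pi h s.
Proof.
move=> r0; apply: backward_ind => [h hH s|i IH s]; first by rewrite Vpi_beyond.
by rewrite VpiE addr_ge0 ?r0 ?Pmean_ge0.
Qed.

Lemma Vpi_affine (al be : R) rw h s :
  Vpi P (fun h s a => al * rw h s a + be) pi h s =
  al * Vpi P rw pi h s + be * (H - h)%:R.
Proof.
move: h s; apply: backward_ind => [h hH s|i IH s].
  by rewrite !Vpi_beyond // (eqP (_ : H - h == 0)%N) ?subn_eq0 // !mulr0 addr0.
rewrite !VpiE /Qpi (eq_Pmean IH) PmeanD PmeanZ Pmean_cst // natr_sub_ordS; ring.
Qed.

Lemma Qpi_affine (al be : R) rw (i : 'I_H) s a :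
  Qpi P (fun h s a => al * rw h s a + be) pi i s a =
  al * Qpi P rw pi i s a + be * (H - i)%:R.
Proof.
rewrite /Qpi (eq_Pmean (Vpi_affine al be rw i.+1)).
by rewrite PmeanD PmeanZ Pmean_cst // natr_sub_ordS; ring.
Qed.

Lemma Vpi_le_steps rw : (forall h s a, (h < H)%N -> rw h s a <= 1) ->
  forall h s, Vpi P rw pi h s <= (H - h)%:R.
Proof.
move=> r1 h s; have := @Vpi_mono rw (fun h s a => 0 * rw h s a + 1) _ h s.
by rewrite Vpi_affine mul0r add0r mul1r; apply=> *; rewrite mul0r add0r r1.
Qed.

Section CauchySchwarz.
Variable f : nat -> S -> A -> R.
Hypothesis f_ge0 : forall h s a, (h < H)%N -> 0 <= f h s a.
Let sqrtf h s a := Num.sqrt (f h s a).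

Lemma Qpi_sqrt_step (i : 'I_H) s a :
  (forall s', Vpi P sqrtf pi i.+1 s' <=
              Num.sqrt ((H - i.+1)%:R * Vpi P f pi i.+1 s')) ->
  Qpi P sqrtf pi i s a <= Num.sqrt ((H - i)%:R * Qpi P f pi i s a).
Proof.
move=> IH; rewrite /Qpi natr_sub_ordS [_ + 1]addrC.
have Vf0 x : 0 <= Vpi P f pi i.+1 x by apply: Vpi_ge0.
apply: le_trans (sqrt_add_le_weighted (f_ge0 _ _ (ltn_ord i)) _ (ler0n _ _)); last first.
  exact: Pmean_ge0.
rewrite lerD2l -PmeanZ; apply: le_trans (ler_Pmean (ltn_ord i) IH) _.
by apply: Pmean_sqrt_le => // x; rewrite mulr_ge0.
Qed.

Lemma Vpi_sqrt_le h s : Vpi P sqrtf pi h s <= Num.sqrt ((H - h)%:R * Vpi P f pi h s).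
Proof.
move: h s; apply: backward_ind => [h hH s|i IH s].
  by rewrite !Vpi_beyond // mulr0 sqrtr0.
by rewrite !VpiE; apply: Qpi_sqrt_step.
Qed.

Lemma Qpi_sqrt_le (i : 'I_H) s a :
  Qpi P sqrtf pi i s a <= Num.sqrt ((H - i)%:R * Qpi P f pi i s a).
Proof. by apply: Qpi_sqrt_step => s'; apply: Vpi_sqrt_le. Qed.

End CauchySchwarz.

(* V^pi[sigma] is the variance of the return, so adding its squared mean gives the
   second moment, which is at most (H - h)^2. *)
Section TotalVariance.
Variable rw : nat -> S -> A -> R.
Hypothesis rw01 : forall h s a, (h < H)%N -> 0 <= rw h s a <= 1.
Let sigma h s a := Pvar P h s a (Vpi P rw pi h.+1).

Lemma Vpi_var_le h s : Vpi P sigma pi h s + Vpi P rw pi h s ^+ 2 <= (H - h)%:R ^+ 2.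
Proof.
move: h s; apply: backward_ind => [h hH s|i IH s].
  by rewrite !Vpi_beyond // (eqP (_ : H - h == 0)%N) ?subn_eq0 // expr0n addr0.
rewrite !VpiE /Qpi /sigma /Pvar; set a := pi i s.
have /andP[r0 r1] := rw01 s a (ltn_ord i).
have W0 : 0 <= Pmean P i s a (Vpi P rw pi i.+1).
  by apply: Pmean_ge0 => // x; apply: Vpi_ge0 => h' s' a' /(rw01 s' a') /andP[].
have W1 : Pmean P i s a (Vpi P rw pi i.+1) <= (H - i.+1)%:R.
  by apply: Pmean_le_cst => // x; apply: Vpi_le_steps => h' s' a' /(rw01 s' a') /andP[].
have := Pmean_le_cst (s := s) (a := a) (ltn_ord i) IH; rewrite PmeanD natr_sub_ordS.
move: W0 W1; set m := (H - i.+1)%:R; set T := Pmean _ _ _ _ (Vpi P sigma pi _).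
set W := Pmean _ _ _ _ (Vpi P rw pi _); set W2 := Pmean _ _ _ _ (fun x => _ ^+ 2).
nra.
Qed.

Lemma Qpi_var_le (i : 'I_H) s a : Qpi P sigma pi i s a <= (H - i)%:R ^+ 2.
Proof.
rewrite /Qpi /sigma /Pvar natr_sub_ordS.
have := Pmean_le_cst (s := s) (a := a) (ltn_ord i) (Vpi_var_le i.+1).
rewrite PmeanD; have m0 : (0 : R) <= (H - i.+1)%:R by [].
move: m0; set m := (H - i.+1)%:R; set T := Pmean _ _ _ _ (Vpi P sigma pi _).
set W := Pmean _ _ _ _ (Vpi P rw pi _); set W2 := Pmean _ _ _ _ (fun x => _ ^+ 2).
have := sqr_ge0 W; nra.
Qed.

End TotalVariance.
End PolicyValue.

Lemma Vpi_le_Vstar (r : nat -> S -> A -> R) (pi : policy S A H) h s :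
  Vpi P r pi h s <= Vstar H P r h s.
Proof. exact: (le_bigmax 0 (fun pi => Vpi P r pi h s)). Qed.

Lemma Qpi_le_Qstar (r : nat -> S -> A -> R) (pi : policy S A H) h s a :
  Qpi P r pi h s a <= Qstar H P r h s a.
Proof. exact: (le_bigmax 0 (fun pi => Qpi P r pi h s a)). Qed.

Section OptimalPolicy.
Variable r : nat -> S -> A -> R.
Hypothesis r01 : forall h s a, (h < H)%N -> 0 <= r h s a <= 1.
Variable pi_dflt : policy S A H.

Lemma r_ge0 h s a : (h < H)%N -> 0 <= r h s a.
Proof. by move=> hH; case/andP: (r01 s a hH). Qed.

Lemma r_le1 h s a : (h < H)%N -> r h s a <= 1.
Proof. by move=> hH; case/andP: (r01 s a hH). Qed.

Fixpoint Vopt_rec (m h : nat) (s : S) : R :=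
  if m is m'.+1 then
    if (h < H)%N then \big[Num.max/0]_(a : A) (r h s a + Pmean P h s a (Vopt_rec m' h.+1))
    else 0
  else 0.

Definition Vopt h s := Vopt_rec (H - h) h s.
Definition Qopt h s a := r h s a + Pmean P h s a (Vopt h.+1).

Lemma VoptE (i : 'I_H) s : Vopt i s = \big[Num.max/0]_(a : A) Qopt i s a.
Proof. by rewrite /Vopt -subnSK //= ltn_ord. Qed.

Lemma Vopt_beyond h s : (H <= h)%N -> Vopt h s = 0.
Proof. by rewrite /Vopt -subn_eq0 => /eqP ->. Qed.

Lemma Vopt_ge0 h s : 0 <= Vopt h s.
Proof.
move: h s; apply: backward_ind => [h hH s|i IH s]; first by rewrite Vopt_beyond.
by rewrite VoptE (bigmax_sup (pi_dflt i s)) // addr_ge0 ?r_ge0 ?Pmean_ge0.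
Qed.

Lemma Qopt_ge0 (i : 'I_H) s a : 0 <= Qopt i s a.
Proof. by rewrite addr_ge0 ?r_ge0 ?Pmean_ge0 // => x; apply: Vopt_ge0. Qed.

Definition pi_opt : policy S A H :=
  [ffun i => [ffun s => [arg max_(a > pi_dflt i s) Qopt i s a]%O]].

Lemma Vopt_pi_opt (i : 'I_H) s : Vopt i s = Qopt i s (pi_opt i s).
Proof. by rewrite VoptE (bigmax_eq_arg _ (pi_dflt i s)) // ?ffunE // => a _; apply: Qopt_ge0. Qed.

Lemma Vpi_opt_Vopt h s : Vpi P r pi_opt h s = Vopt h s.
Proof.
move: h s; apply: backward_ind => [h hH s|i IH s].
  by rewrite Vopt_beyond // Vpi_beyond.
by rewrite VpiE Vopt_pi_opt /Qpi /Qopt (eq_Pmean IH).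
Qed.

Lemma Vpi_le_Vopt (pi : policy S A H) h s : Vpi P r pi h s <= Vopt h s.
Proof.
move: h s; apply: backward_ind => [h hH s|i IH s].
  by rewrite Vopt_beyond // Vpi_beyond.
by rewrite VpiE VoptE (bigmax_sup (pi i s)) // lerD2l ler_Pmean.
Qed.

Lemma Vstar_Vopt h s : Vstar H P r h s = Vopt h s.
Proof.
apply/le_anti; rewrite -{2}Vpi_opt_Vopt Vpi_le_Vstar andbT.
by apply: bigmax_le => [|pi _]; [apply: Vopt_ge0 | apply: Vpi_le_Vopt].
Qed.

Lemma Vpi_pi_opt h s : Vpi P r pi_opt h s = Vstar H P r h s.
Proof. by rewrite Vstar_Vopt Vpi_opt_Vopt. Qed.

Lemma Qstar_pi_opt (i : 'I_H) s a : Qstar H P r i s a = Qpi P r pi_opt i s a.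
Proof.
apply/le_anti; rewrite Qpi_le_Qstar andbT /Qpi (eq_Pmean (Vpi_opt_Vopt i.+1)).
apply: bigmax_le => [|pi _]; first exact: Qopt_ge0.
by rewrite /Qpi lerD2l ler_Pmean // => x; apply: Vpi_le_Vopt.
Qed.

End OptimalPolicy.
End MDPTheory.

Section Numerics.
Variable R : realType.

Lemma natr_absz_ceil (t : R) : 0 <= t -> t <= `|Num.ceil t|%N%:R < t + 1.
Proof.
move=> t0; rewrite natr_absz ger0_norm ?ceil_ge0 ?(lt_le_trans _ t0) ?ltrN10 //.
by have := ceil_itv t; rewrite intrD => /andP[h1 ->] /=; lra.
Qed.

Lemma pow2_ceil_log2 (x : R) : 1 <= x ->
  x <= 2 ^+ `|Num.ceil (ln x / ln 2)|%N < 2 * x.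
Proof.
move=> x1; have l2 : 0 < ln (2 : R) by rewrite ln_gt0 // ltr1n.
have xE : expR (ln x) = x by rewrite lnK // posrE (lt_le_trans ltr01).
have pow2E n : (2 : R) ^+ n = expR (n%:R * ln 2) by rewrite expRM_natl lnK // posrE ltr0n.
have := natr_absz_ceil (divr_ge0 (ln_ge0 x1) (ltW l2)).
move: `|_|%N => n /andP[tn nt]; rewrite pow2E; apply/andP; split.
  by rewrite -{1}xE ler_expR -ler_pdivrMr.
have -> : 2 * x = expR (ln 2 + ln x) by rewrite expRD xE lnK // posrE ltr0n.
rewrite ltr_expR.
by rewrite -ltr_pdivlMr // mulrDl divff ?gt_eqF // addrC.
Qed.

Lemma max_sub_sqr_near (Hn mu2 mu m2 m1 : R) :
  1 <= Hn -> 0 <= mu <= Hn -> mu ^+ 2 <= mu2 ->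
  `|m2 - mu2| < 1 -> `|m1 - mu| < 1 / Hn ->
  0 <= Num.max (m2 - m1 ^+ 2) 0 /\ `|Num.max (m2 - m1 ^+ 2) 0 - (mu2 - mu ^+ 2)| <= 4.
Proof.
move=> H1 /andP[mu0 muH] var0 /ltW + /ltW m1mu; rewrite ler_norml => /andP[a1 a2].
set d := m1 - mu in m1mu *; have -> : m1 = mu + d by rewrite /d addrC subrK.
move: (m1mu); rewrite ler_norml => /andP[d1 d2].
have Hn_pos : 0 < Hn by apply: lt_le_trans H1.
have invH1 : 1 / Hn <= 1 by rewrite ler_pdivrMr // mul1r.
have mud : `|mu * d| <= 1.
  have <- : Hn * (1 / Hn) = 1 by rewrite mul1r divff // lt0r_neq0.
  by rewrite normrM ger0_norm // ler_pM.
have dd : d ^+ 2 <= 1 by rewrite -real_normK ?num_real // expr_le1 // (le_trans m1mu).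
move: mud; rewrite ler_norml => /andP[b1 b2].
have d0 := sqr_ge0 d; split; first by rewrite le_max lexx orbT.
have -> : (mu + d) ^+ 2 = mu ^+ 2 + 2 * (mu * d) + d ^+ 2 by ring.
by rewrite /Num.max; case: ifP => hx; rewrite ler_norml; apply/andP; split; lra.
Qed.

Lemma sqrt_cubic_le (m Hn C : R) : 0 <= m <= Hn -> 0 <= C ->
  Num.sqrt (m * (2 * m ^+ 2 + C * m)) <= Hn * Num.sqrt (2 * Hn + C).
Proof.
move=> /andP[m0 mH] C0; have Hn0 := le_trans m0 mH.
have -> : Hn * Num.sqrt (2 * Hn + C) = Num.sqrt (Hn ^+ 2 * (2 * Hn + C)).
  by rewrite sqrtrM ?sqr_ge0 // sqrtr_sqr ger0_norm.
rewrite ler_wsqrtr //.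
have -> : m * (2 * m ^+ 2 + C * m) = m ^+ 2 * (2 * m + C) by ring.
by rewrite ler_pM ?sqr_ge0 ?addr_ge0 ?mulr_ge0 ?lerD2r ?ler_pM2l ?lerXn2r // nnegrE.
Qed.

Lemma bias_budget (c Hn e m : R) : 0 <= c -> 100 * c <= 1 -> 0 < e -> 0 < Hn ->
  0 <= m <= Hn -> 2 * (c * e / Hn) * m <= e / 2.
Proof.
move=> c0 c_small e0 Hn0 /andP[m0 mH].
have -> : 2 * (c * e / Hn) * m = 2 * (c * e) * (m / Hn) by ring.
have t1 : m / Hn <= 1 by rewrite ler_pdivrMr ?mul1r.
have cet : c * e * (m / Hn) <= c * e by rewrite ler_piMr // mulr_ge0 // ltW.
rewrite -mulrA (le_trans (ler_wpM2l _ cet)) //; nra.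
Qed.

Lemma variance_budget (c Hn e ep : R) : 0 <= c -> 100 * c <= 1 -> 1 <= Hn ->
  0 < e -> 0 < ep -> ep <= 2 * e -> ep <= Num.sqrt Hn ->
  2 * c * ep * Num.sqrt (2 * Hn + 8 * e ^+ 2 + 8) <= e / 2 * Num.sqrt Hn.
Proof.
move=> c0 c_small Hn1 e0 ep0 ep_2e ep_sqrtH.
have [Hn0 e0' ep0'] : [/\ 0 <= Hn, 0 <= e & 0 <= ep] by split; lra.
have Z0 : 0 <= 2 * Hn + 8 * e ^+ 2 + 8 by have := sqr_ge0 e; lra.
rewrite -ler_sqr ?nnegrE; last 2 first.
- by rewrite !mulr_ge0 ?sqrtr_ge0.
- by rewrite !mulr_ge0 ?sqrtr_ge0 ?invr_ge0.
rewrite !exprMn !sqr_sqrtr //.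
have ep2H : ep ^+ 2 <= Hn.
  by rewrite -(sqr_sqrtr Hn0) ler_sqr ?nnegrE ?sqrtr_ge0.
have ep2e : ep ^+ 2 <= 4 * e ^+ 2 by nra.
have c2 : c ^+ 2 <= 1 / 10000 by have := sqr_ge0 c; nra.
have := sqr_ge0 e; have := sqr_ge0 c.
move: (e ^+ 2) (ep ^+ 2) (c ^+ 2) ep2H ep2e c2 => E2 P2 C2 P2H P2E C2s C20 E20.
have EH0 : 0 <= E2 * Hn by rewrite mulr_ge0.
have X48 : P2 * (2 * Hn + 8 * E2 + 8) <= 48 * (E2 * Hn).
  have := ler_wpM2r Hn0 P2E; have := ler_wpM2r E20 P2H; have := ler_wpM2l E20 Hn1.
  nra.
have -> : 2 ^+ 2 * C2 * P2 * (2 * Hn + 8 * E2 + 8) =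
          4 * (C2 * (P2 * (2 * Hn + 8 * E2 + 8))) by ring.
have -> : E2 * 2^-1 ^+ 2 * Hn = E2 * Hn / 4 by field.
move: X48 EH0; move: (P2 * _) (E2 * Hn) => X Y X48 Y0.
have CX : C2 * X <= C2 * (48 * Y) by apply: ler_wpM2l.
have CY : C2 * Y <= 1 / 10000 * Y by apply: ler_wpM2r.
lra.
Qed.

(* The final accounting, for c = QVI_c, Hn = H, m = H - h, e = eps_k and ep = eps. *)
Lemma error_budget (c Hn m e ep : R) : 0 <= c -> 100 * c <= 1 -> 1 <= Hn ->
  0 <= m <= Hn -> 0 < e -> 0 < ep -> ep <= 2 * e -> ep <= Num.sqrt Hn ->
  2 * (c * ep / (Hn * Num.sqrt Hn)) * Num.sqrt (m * (2 * m ^+ 2 + (8 * e ^+ 2 + 8) * m))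
    + 2 * (c * e / Hn) * m <= e.
Proof.
move=> c0 c_small Hn1 mHn e0 ep0 ep_2e ep_sqrtH.
have Hn0 : 0 < Hn by apply: lt_le_trans Hn1.
have q0 : 0 < Num.sqrt Hn by rewrite sqrtr_gt0.
have C0 : 0 <= 8 * e ^+ 2 + 8 by have := sqr_ge0 e; lra.
have coef_ge0 : 0 <= 2 * (c * ep / (Hn * Num.sqrt Hn)).
  by rewrite mulr_ge0 ?divr_ge0 ?mulr_ge0 ?sqrtr_ge0 ?(ltW ep0) ?(ltW Hn0).
have := bias_budget c0 c_small e0 Hn0 mHn.
have := ler_wpM2l coef_ge0 (sqrt_cubic_le mHn C0).
have -> : 2 * (c * ep / (Hn * Num.sqrt Hn)) * (Hn * Num.sqrt (2 * Hn + (8 * e ^+ 2 + 8))) =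
          2 * c * ep * Num.sqrt (2 * Hn + 8 * e ^+ 2 + 8) / Num.sqrt Hn.
  by rewrite addrA; field; rewrite !gt_eqF.
have : 2 * c * ep * Num.sqrt (2 * Hn + 8 * e ^+ 2 + 8) / Num.sqrt Hn <= e / 2.
  by rewrite ler_pdivrMr // variance_budget.
lra.
Qed.

End Numerics.

Section QVIAnalysis.
Variables (R : realType) (S A : finType) (H : nat).
Variables (P : nat -> S -> A -> S -> R) (r : nat -> S -> A -> R).
Variables (est1 est2 : S -> A -> nat -> (S -> R) -> R -> R -> R -> dist R R).
Variables (eps delta : R) (piinit : policy S A H).
Hypothesis P_ge0 : forall h s a s', (h < H)%N -> 0 <= P h s a s'.
Hypothesis P_sum1 : forall h s a, (h < H)%N -> \sum_(s' : S) P h s a s' = 1.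
Hypothesis r01 : forall h s a, (h < H)%N -> 0 <= r h s a <= 1.
Hypothesis spec1 : QME1_spec H P est1.
Hypothesis spec2 : QME2_spec H P est2.
Hypothesis eps_gt0 : 0 < eps.
Hypothesis eps_le_sqrtH : eps <= Num.sqrt H%:R.
Hypothesis delta01 : 0 < delta < 1.

Local Notation K := (QVI_K H eps).
Local Notation zeta := (QVI_zeta S A H eps delta).
Local Notation c := (@QVI_c R).
Local Notation b := (@QVI_b R).
Local Notation PM := (Pmean P).
Local Notation Vs := (Vstar H P r).
Local Notation Qs := (Qstar H P r).
Local Notation pis := (pi_opt P r piinit).
Local Notation Vpi_pis := (Vpi_pi_opt P_ge0 P_sum1 r01 piinit).

Definition epsk (k : nat) : R := H%:R / 2 ^+ k.

Lemma H_gt0 : (0 < H)%N.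
Proof.
rewrite lt0n; apply/eqP => H0; move: eps_le_sqrtH eps_gt0; rewrite H0 sqrtr0.
by move=> /le_lt_trans/[apply]; rewrite ltxx.
Qed.

Lemma H_ge1 : (1 : R) <= H%:R.
Proof. by rewrite ler1n H_gt0. Qed.

Lemma eps_le_H : eps <= H%:R.
Proof.
apply: le_trans eps_le_sqrtH _; have H0 : (0 : R) <= H%:R by [].
have q1 : 1 <= Num.sqrt (H%:R : R) by have := ler_wsqrtr H_ge1; rewrite sqrtr1.
by rewrite -{2}(sqr_sqrtr H0) expr2 ler_peMl ?sqrtr_ge0.
Qed.

Lemma pow2_Kpred : H%:R / eps <= 2 ^+ K.-1 < 2 * (H%:R / eps).
Proof. by rewrite /QVI_K addn1 /= pow2_ceil_log2 // ler_pdivlMr // mul1r eps_le_H. Qed.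

Lemma epsk_gt0 k : 0 < epsk k.
Proof. by rewrite divr_gt0 ?exprn_gt0 // ltr0n H_gt0. Qed.

Lemma epskS k : 2 * epsk k.+1 = epsk k.
Proof. by rewrite /epsk exprS invfM; field; rewrite expf_neq0. Qed.

Lemma epsk_Kpred : epsk K.-1 <= eps.
Proof.
have /andP[+ _] := pow2_Kpred.
by rewrite /epsk ler_pdivrMr // mulrC -ler_pdivrMr ?exprn_gt0.
Qed.

Lemma eps_le_2epsk k : (k < K)%N -> eps <= 2 * epsk k.
Proof.
move=> kK; have /andP[_] := pow2_Kpred; rewrite mulrA ltr_pdivlMr // => /ltW hK.
rewrite /epsk mulrA ler_pdivlMr ?exprn_gt0 //; apply: le_trans hK.
rewrite mulrC ler_wpM2r ?(ltW eps_gt0) //.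
by rewrite ler_eXn2l ?ltr1n //; lia.
Qed.

Lemma QVI_c_gt0 : 0 < c.
Proof. rewrite /QVI_c; lra. Qed.

Lemma QVI_c_small : 100 * c <= 1.
Proof. rewrite /QVI_c; lra. Qed.

Lemma zeta_ge0 : 0 <= zeta.
Proof. by case/andP: delta01 => d0 _; rewrite /QVI_zeta divr_ge0 // ltW. Qed.

Lemma zeta_in01 (s : S) (a : A) : 0 < zeta < 1.
Proof.
have N0 : (0 < 4 * K * H * #|S| * #|A|)%N.
  rewrite !muln_gt0 /QVI_K addn1 H_gt0 /=.
  by apply/andP; split; apply/card_gt0P; [exists s | exists a].
case/andP: delta01 => d0 d1; rewrite /QVI_zeta divr_gt0 ?ltr0n //= ltr_pdivrMr ?ltr0n //.
by apply: lt_le_trans d1 _; rewrite ler_peMr ?ler1n // ltW.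
Qed.

Lemma zeta_union : (4 * K * H * #|S| * #|A|)%N%:R * zeta <= delta.
Proof.
case/andP: delta01 => d0 _; rewrite /QVI_zeta.
have [->|N0] := posnP (4 * K * H * #|S| * #|A|)%N; first by rewrite mul0r ltW.
by rewrite mulrC mulfVK // pnatr_eq0 -lt0n.
Qed.

Lemma Vstar_step (i : 'I_H) s : Vs i s = r i s (pis i s) + PM i s (pis i s) (Vs i.+1).
Proof. by rewrite -Vpi_pis VpiE /Qpi (eq_Pmean P (Vpi_pis i.+1)). Qed.

Lemma Qstar_step (i : 'I_H) s a : Qs i s a = r i s a + PM i s a (Vs i.+1).
Proof. by rewrite (Qstar_pi_opt P_ge0 P_sum1 r01 piinit) /Qpi (eq_Pmean P (Vpi_pis i.+1)). Qed.

Lemma Vstar_beyond h s : (H <= h)%N -> Vs h s = 0.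
Proof. by move=> hH; rewrite -Vpi_pis Vpi_beyond. Qed.

Lemma Vstar_le_H h s : Vs h s <= H%:R.
Proof.
rewrite -Vpi_pis (le_trans (Vpi_le_steps P_ge0 P_sum1 _ _ h s)) ?ler_nat ?leq_subr //.
exact: r_le1 r01.
Qed.

Lemma subsolution_le_Vpi (pi : policy S A H) (V : nat -> S -> R) h0 :
  (forall h s, (H <= h)%N -> V h s = 0) ->
  (forall (i : 'I_H) s, (h0 <= i)%N -> V i s <= r i s (pi i s) + PM i s (pi i s) (V i.+1)) ->
  forall h s, (h0 <= h)%N -> V h s <= Vpi P r pi h s.
Proof.
move=> V_beyond V_sub; apply: (@backward_ind H) => [h hH s _|i IH s hi].
  by rewrite V_beyond // Vpi_beyond.
rewrite VpiE; apply: le_trans (V_sub i s hi) _.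
rewrite lerD2l (ler_Pmean P_ge0 (ltn_ord i)) // => x.
exact: IH (leqW hi).
Qed.

Definition iter_inv (k : nat) (pi0 : policy S A H) (V0 : nat -> S -> R) : Prop :=
  (forall h s, (H <= h)%N -> V0 h s = 0) /\
  forall (i : 'I_H) s, [/\ 0 <= V0 i s,
    V0 i s <= r i s (pi0 i s) + PM i s (pi0 i s) (V0 i.+1) &
    Vs i s - V0 i s <= 2 * epsk k].

Definition iter_post (k : nat) (o : out_t R S A H) : Prop :=
  let: (pi, V, Q) := o in
  iter_inv k.+1 pi V /\
  forall (i : 'I_H) s a, Q i s a <= r i s a + PM i s a (V i.+1) /\ Qs i s a - Q i s a <= epsk k.

Lemma iter_inv0 : iter_inv 0 piinit (fun _ _ => 0).
Proof.
split=> // i s; rewrite (Pmean_cst P_sum1 (ltn_ord i)) addr0 subr0 (r_ge0 r01 _ _ (ltn_ord i)) //=.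
by rewrite /epsk expr0 divr1 (le_trans (Vstar_le_H _ _)) // ler_peMl // ler1n.
Qed.

Lemma iter_inv_le_Vpi k pi0 V0 : iter_inv k pi0 V0 -> forall h s, V0 h s <= Vpi P r pi0 h s.
Proof.
case=> V0_beyond V0_sub h s; apply: (subsolution_le_Vpi (h0 := 0)) => // i s' _.
by case: (V0_sub i s').
Qed.

Lemma QVI_good_of_post o : iter_post K.-1 o -> QVI_good P r eps o.
Proof.
case: o => [[pi V] Q] [inv QB]; have le_eps := epsk_Kpred.
have V_Vpi := iter_inv_le_Vpi inv; case: inv => _ V_sub.
apply/forallP => h; apply/forallP => s; have [_ _] := V_sub h s.
rewrite epskS => Vs_V; rewrite V_Vpi Vpi_le_Vstar andbT.
apply/andP; split; first by rewrite lerBlDr -lerBlDl (le_trans Vs_V).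
apply/forallP => a; have [Q_sub Qs_Q] := QB h s a.
rewrite Qpi_le_Qstar andbT lerBlDr -lerBlDl (le_trans Qs_Q) //=.
by rewrite (le_trans Q_sub) // lerD2l (ler_Pmean P_ge0 (ltn_ord h)).
Qed.

Lemma dvalid_est1 s a h f u e z : dvalid (est1 s a h f u e z).
Proof. exact: spec1.1. Qed.

Lemma dvalid_est2 s a h f u e z : dvalid (est2 s a h f u e z).
Proof. exact: spec2.1. Qed.

Definition gamma : R := c * eps / (H%:R * Num.sqrt H%:R).

Lemma gamma_gt0 : 0 < gamma.
Proof.
have Hq_gt0 : 0 < H%:R * Num.sqrt (H%:R : R) by rewrite mulr_gt0 ?sqrtr_gt0 ?ltr0n ?H_gt0.
by apply: divr_gt0 => //; apply: mulr_gt0 QVI_c_gt0 eps_gt0.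
Qed.

Lemma gamma_le_c : gamma <= c.
Proof.
have q1 : 1 <= Num.sqrt (H%:R : R) by have := ler_wsqrtr H_ge1; rewrite sqrtr1.
have Hq_gt0 : 0 < H%:R * Num.sqrt (H%:R : R) by rewrite mulr_gt0 ?ltr0n ?H_gt0 ?(lt_le_trans ltr01).
rewrite /gamma ler_pdivrMr // ler_wpM2l ?(ltW QVI_c_gt0) // (le_trans eps_le_sqrtH) //.
by rewrite ler_peMl ?sqrtr_ge0 ?H_ge1.
Qed.

Lemma gamma_lt4 : gamma < 4.
Proof. by apply: le_lt_trans gamma_le_c _; have := QVI_c_small; lra. Qed.

Definition policy_of (pi : 'I_H -> S -> A) : policy S A H := [ffun h => [ffun s => pi h s]].

Lemma policy_ofE pi (i : 'I_H) s : policy_of pi i s = pi i s.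
Proof. by rewrite !ffunE. Qed.

Section Iteration.
Variables (k : nat) (pi0 : policy S A H) (V0 : nat -> S -> R).

Definition var_est (i : 'I_H * S * A) : dist R R :=
  dbind (est1 i.1.2 i.2 i.1.1 (fun s' => V0 i.1.1.+1 s' ^+ 2) (H%:R ^+ 2) b zeta) (fun m2 =>
  dbind (est1 i.1.2 i.2 i.1.1 (V0 i.1.1.+1) H%:R (b / H%:R) zeta) (fun m1 =>
  dret (Num.max (m2 - m1 ^+ 2) 0))).

Definition eta (y : 'I_H * S * A -> R) i := gamma * Num.sqrt (y i + 4 * b).

Definition mean_est (y : 'I_H * S * A -> R) (i : 'I_H * S * A) : dist R R :=
  dbind (est2 i.1.2 i.2 i.1.1 (V0 i.1.1.+1) (Num.sqrt (y i + 4 * b)) (eta y i) zeta)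
    (fun m => dret (m - eta y i)).

Definition corr_est (V : nat -> S -> R) (hi : 'I_H) (sa : S * A) : dist R R :=
  dbind (est1 sa.1 sa.2 hi (fun s' => V hi.+1 s' - V0 hi.+1 s') (2 * epsk k)
           (c * epsk k / H%:R) zeta)
    (fun m => dret (m - c * epsk k / H%:R)).

Definition Qbackup (x : 'I_H * S * A -> R) (hi : 'I_H) (g : S * A -> R) s a :=
  Num.max (r hi s a + x (hi, s, a) + g (s, a)) 0.

Definition backup (x : 'I_H * S * A -> R) (hi : 'I_H) (st : loop_t R S A H)
    (g : S * A -> R) : loop_t R S A H :=
  let: (V, Q, pi) := st in
  let Qh := Qbackup x hi g in
  let mx s := \big[Num.max/0]_(a : A) Qh s a in
  let am s := Order.arg_max (pi0 hi s) xpredT (Qh s) in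
  ((fun h' s => if h' == hi :> nat then
                  (if mx s <= V0 hi s then V0 hi s else mx s)
                else V h' s),
   (fun h' s a => if h' == hi :> nat then Qh s a else Q h' s a),
   (fun h' s => if h' == hi then
                  (if mx s <= V0 hi s then pi0 hi s else am s)
                else pi h' s)).

Definition backup_step (x : 'I_H * S * A -> R) (hi : 'I_H) (st : loop_t R S A H) :=
  let: (V, Q, pi) := st in
  dbind (drawall (corr_est V hi)) (fun g => dret (backup x hi (V, Q, pi) g)).

Definition loop_init : loop_t R S A H :=
  ((fun _ _ => 0), (fun _ _ _ => 0), (fun h s => pi0 h s)).

Definition backward_pass (x : 'I_H * S * A -> R) (l : seq 'I_H) :=
  foldr (fun hi acc => dbind acc (backup_step x hi)) (dret loop_init) l.

Definition to_output (st : loop_t R S A H) : dist R (out_t R S A H) :=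
  let: (V, Q, pi) := st in dret (policy_of pi, V, Q).

Lemma QVI_iterE : QVI_iter r est1 est2 eps delta k pi0 V0 =
  dbind (drawall var_est) (fun y => dbind (drawall (mean_est y)) (fun x =>
    dbind (backward_pass x (enum 'I_H)) to_output)).
Proof. by []. Qed.

Lemma dvalid_var_est i : dvalid (var_est i).
Proof.
apply: dvalid_dbind => [|m2]; first exact: dvalid_est1.
by apply: dvalid_dbind => [|m1]; [apply: dvalid_est1 | apply: dvalid_dret].
Qed.

Lemma dvalid_mean_est y i : dvalid (mean_est y i).
Proof. by apply: dvalid_dbind => [|m]; [apply: dvalid_est2 | apply: dvalid_dret]. Qed.

Lemma dvalid_corr_est V hi sa : dvalid (corr_est V hi sa).
Proof. by apply: dvalid_dbind => [|m]; [apply: dvalid_est1 | apply: dvalid_dret]. Qed.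

Lemma dvalid_backup_step x hi st : dvalid (backup_step x hi st).
Proof.
case: st => [[V Q] pi]; apply: dvalid_dbind => [|g]; last exact: dvalid_dret.
exact: dvalid_drawall (dvalid_corr_est V hi).
Qed.

Lemma dvalid_backward_pass x l : dvalid (backward_pass x l).
Proof.
elim: l => [|hi l IH] /=; first exact: dvalid_dret.
by apply: dvalid_dbind => // st; apply: dvalid_backup_step.
Qed.

Lemma dvalid_pass_output x : dvalid (dbind (backward_pass x (enum 'I_H)) to_output).
Proof.
by apply: dvalid_dbind => [|[[V Q] pi]]; [apply: dvalid_backward_pass | apply: dvalid_dret].
Qed.

Lemma dvalid_QVI_iter : dvalid (QVI_iter r est1 est2 eps delta k pi0 V0).
Proof.
rewrite QVI_iterE; apply: dvalid_dbind => [|y]; first exact: dvalid_drawall dvalid_var_est.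
apply: dvalid_dbind => [|x]; first exact: dvalid_drawall (dvalid_mean_est y).
exact: dvalid_pass_output.
Qed.

Hypothesis k_lt_K : (k < K)%N.
Hypothesis inv : iter_inv k pi0 V0.

Lemma V0_beyond h s : (H <= h)%N -> V0 h s = 0.
Proof. by case: inv => V0_beyond _; apply: V0_beyond. Qed.

Lemma V0_bounds h s :
  [/\ 0 <= V0 h s, V0 h s <= Vs h s & Vs h s - V0 h s <= 2 * epsk k].
Proof.
case: (leqP H h) => hH.
  by rewrite V0_beyond // Vstar_beyond // subrr mulr_ge0 // ltW // epsk_gt0.
have [V0_ge0 _ V0_gap] := inv.2 (Ordinal hH) s; split => //.
by apply: le_trans (iter_inv_le_Vpi inv h s) _; apply: Vpi_le_Vstar.
Qed.

Lemma V0_range h s : 0 <= V0 h s <= H%:R.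
Proof.
have [V0_ge0 V0_Vs _] := V0_bounds h s.
by rewrite V0_ge0 (le_trans V0_Vs) ?Vstar_le_H.
Qed.

Definition var_ok (i : 'I_H * S * A) (v : R) : bool :=
  (0 <= v) && (`|v - Pvar P i.1.1 i.1.2 i.2 (V0 i.1.1.+1)| <= 4).

Definition mean_ok (y : 'I_H * S * A -> R) (i : 'I_H * S * A) (v : R) : bool :=
  PM i.1.1 i.1.2 i.2 (V0 i.1.1.+1) - 2 * eta y i <= v <= PM i.1.1 i.1.2 i.2 (V0 i.1.1.+1).

Definition corr_ok (V : nat -> S -> R) (hi : 'I_H) (sa : S * A) (v : R) : bool :=
  PM hi sa.1 sa.2 (fun s' => V hi.+1 s' - V0 hi.+1 s') - 2 * (c * epsk k / H%:R) <= v <=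
  PM hi sa.1 sa.2 (fun s' => V hi.+1 s' - V0 hi.+1 s').

Lemma var_ok_max_sub_sqr (i : 'I_H * S * A) m2 m1 :
  `|m2 - PM i.1.1 i.1.2 i.2 (fun s' => V0 i.1.1.+1 s' ^+ 2)| < b ->
  `|m1 - PM i.1.1 i.1.2 i.2 (V0 i.1.1.+1)| < b / H%:R ->
  var_ok i (Num.max (m2 - m1 ^+ 2) 0).
Proof.
move=> m2_near m1_near; have hH := ltn_ord i.1.1.
have mu_range : 0 <= PM i.1.1 i.1.2 i.2 (V0 i.1.1.+1) <= H%:R.
  apply/andP; split; [apply: (Pmean_ge0 P_ge0 P_sum1 hH) | apply: (Pmean_le_cst P_ge0 P_sum1 hH)]
    => x; by case/andP: (V0_range i.1.1.+1 x).
have := Pvar_ge0 P_ge0 P_sum1 (s := i.1.2) (a := i.2) hH (V0 i.1.1.+1).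
rewrite /Pvar subr_ge0 => var_ge0.
have [v_ge0 v_near] := max_sub_sqr_near H_ge1 mu_range var_ge0 m2_near m1_near.
by rewrite /var_ok v_ge0.
Qed.

Definition err (y : 'I_H * S * A -> R) i := 2 * eta y i + 2 * (c * epsk k / H%:R).

(* [err] as a reward on all time steps, zero beyond the horizon. *)
Definition err_ext (y : 'I_H * S * A -> R) (h : nat) s a :=
  oapp (fun i : 'I_H => err y (i, s, a)) 0 (insub h).

Lemma err_extE y (i : 'I_H) s a : err_ext y i s a = err y (i, s, a).
Proof. by rewrite /err_ext valK. Qed.

(* Invariant of the backward pass once the steps h0, ..., H - 1 have been updated. *)
Definition loop_inv (y : 'I_H * S * A -> R) (h0 : nat) (st : loop_t R S A H) : Prop :=
  let: (V, Q, pi) := st in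
  (forall h s, (H <= h)%N -> V h s = 0) /\
  forall (i : 'I_H) s, (h0 <= i)%N ->
    [/\ V0 i s <= V i s, V i s <= r i s (pi i s) + PM i s (pi i s) (V i.+1) &
        forall a, [/\ Q i s a <= V i s, Q i s a <= r i s a + PM i s a (V i.+1) &
                      r i s a + PM i s a (V i.+1) - err y (i, s, a) <= Q i s a]].

Section LoopInvariant.
Variables (y : 'I_H * S * A -> R) (h0 : nat) (V : nat -> S -> R).
Variables (Q : nat -> S -> A -> R) (pi : 'I_H -> S -> A).
Hypothesis linv : loop_inv y h0 (V, Q, pi).

Lemma loop_inv_V0_le h s : (h0 <= h)%N -> V0 h s <= V h s.
Proof.
case: linv => V_beyond V_sub hh; case: (leqP H h) => hH.
  by rewrite V_beyond // V0_beyond.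
by case: (V_sub (Ordinal hH) s hh).
Qed.

Lemma loop_inv_le_Vstar h s : (h0 <= h)%N -> V h s <= Vs h s.
Proof.
case: linv => V_beyond V_sub hh; apply: (le_trans _ (Vpi_le_Vstar P r (policy_of pi) h s)).
apply: (subsolution_le_Vpi (h0 := h0)) => // i s' hi.
by rewrite policy_ofE; case: (V_sub i s' hi).
Qed.

Lemma loop_inv_V_ge0 h s : (h0 <= h)%N -> 0 <= V h s.
Proof.
by move=> hh; case/andP: (V0_range h s) => V0_ge0 _; apply: le_trans V0_ge0 (loop_inv_V0_le s hh).
Qed.

End LoopInvariant.

Lemma Qbackup_bounds y x (hi : 'I_H) V g s a :
  (forall i, mean_ok y i (x i)) -> (forall sa, corr_ok V hi sa (g sa)) ->
  (forall s', 0 <= V hi.+1 s') ->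
  [/\ 0 <= Qbackup x hi g s a, Qbackup x hi g s a <= r hi s a + PM hi s a (V hi.+1) &
      r hi s a + PM hi s a (V hi.+1) - err y (hi, s, a) <= Qbackup x hi g s a].
Proof.
move=> x_ok g_ok V_ge0; have /andP[x1 x2] := x_ok (hi, s, a).
have /andP[] := g_ok (s, a); rewrite /= PmeanB => g1 g2.
have r0 := r_ge0 r01 s a (ltn_ord hi).
have PV0 : 0 <= PM hi s a (V hi.+1) by apply: (Pmean_ge0 P_ge0 P_sum1 (ltn_ord hi)).
rewrite /Qbackup /err le_max lexx orbT /Num.max; split => //; case: ifP => hc; lra.
Qed.

Lemma greedy_backup_ok y x (hi : 'I_H) V g s :
  (forall i, mean_ok y i (x i)) -> (forall sa, corr_ok V hi sa (g sa)) ->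
  (forall s', V0 hi.+1 s' <= V hi.+1 s') ->
  let Qh := Qbackup x hi g in
  let mx := \big[Num.max/0]_(a : A) Qh s a in
  let am := Order.arg_max (pi0 hi s) xpredT (Qh s) in
  let V' := if mx <= V0 hi s then V0 hi s else mx in
  let a' := if mx <= V0 hi s then pi0 hi s else am in
  [/\ V0 hi s <= V', V' <= r hi s a' + PM hi s a' (V hi.+1) & forall a, Qh s a <= V'].
Proof.
move=> x_ok g_ok V0_V Qh mx am V' a'.
have V_ge0 s' : 0 <= V hi.+1 s'.
  by case/andP: (V0_range hi.+1 s') => V0_ge0 _; apply: le_trans V0_ge0 (V0_V s').
have Qh_bounds a := Qbackup_bounds s a x_ok g_ok V_ge0.
have mx_am : mx = Qh s am.
  by apply: bigmax_eq_arg => // a _; case: (Qh_bounds a).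
have [_ V0_sub _] := inv.2 hi s.
rewrite /V' /a'; case: ifP => [mx_le | /negbT]; last first.
  rewrite -ltNge => /ltW V0_mx; split => // [|a]; last exact: le_bigmax.
  by rewrite mx_am; case: (Qh_bounds am).
split => // [|a]; last exact: le_trans (le_bigmax _ _ a) mx_le.
by apply: le_trans V0_sub _; rewrite lerD2l (ler_Pmean P_ge0 (ltn_ord hi)).
Qed.

Lemma backup_loop_inv y x (hi : 'I_H) V Q pi g :
  (forall i, mean_ok y i (x i)) -> loop_inv y hi.+1 (V, Q, pi) ->
  (forall sa, corr_ok V hi sa (g sa)) -> loop_inv y hi (backup x hi (V, Q, pi) g).
Proof.
move=> x_ok linv g_ok; have [V_beyond V_sub] := linv.
have V0_V s' : V0 hi.+1 s' <= V hi.+1 s' by apply: (loop_inv_V0_le linv).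
have V_ge0 s' : 0 <= V hi.+1 s' by apply: (loop_inv_V_ge0 linv).
split=> [h s hH | i s hi_i] /=.
  by rewrite ifF ?V_beyond //; apply/eqP => h_hi; move: hH; rewrite h_hi leqNgt ltn_ord.
have -> : (i.+1 == hi :> nat) = false by apply/eqP => e; move: hi_i; rewrite -e ltnn.
have [/val_inj eq_i | ne_i] := eqVneq (i : nat) hi; last first.
  rewrite ifF; last by apply: contraNF ne_i => /eqP ->.
  by apply: V_sub; rewrite ltn_neqAle eq_sym ne_i.
subst i; rewrite !eqxx; have [V0_le V'_sub Qh_le] := greedy_backup_ok s x_ok g_ok V0_V.
split=> // a; have [_ Q_sub Q_lb] := Qbackup_bounds s a x_ok g_ok V_ge0.
by split; [apply: Qh_le | |].
Qed.

Section ErrorPropagation.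
Variables (y : 'I_H * S * A -> R) (V : nat -> S -> R).
Variables (Q : nat -> S -> A -> R) (pi : 'I_H -> S -> A).
Hypothesis linv : loop_inv y 0 (V, Q, pi).

Lemma Qstar_sub_le_step (i : 'I_H) s a :
  (forall s', Vs i.+1 s' - V i.+1 s' <= Vpi P (err_ext y) pis i.+1 s') ->
  Qs i s a - Q i s a <= Qpi P (err_ext y) pis i s a.
Proof.
move=> IH; have [_ _ Q_bounds] := linv.2 i s isT; have [_ _ Q_lb] := Q_bounds a.
have := ler_Pmean P_ge0 (s := s) (a := a) (ltn_ord i) IH.
by rewrite Qstar_step /Qpi err_extE PmeanB; lra.
Qed.

Lemma Vstar_sub_le h s : Vs h s - V h s <= Vpi P (err_ext y) pis h s.
Proof.
move: h s; apply: (@backward_ind H) => [h hH s|i IH s].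
  by rewrite Vstar_beyond // linv.1 // Vpi_beyond // subr0.
have [_ _ Q_bounds] := linv.2 i s isT; have [Q_le_V _ _] := Q_bounds (pis i s).
rewrite VpiE; apply: (le_trans _ (Qstar_sub_le_step s (pis i s) IH)).
by rewrite Qstar_step -Vstar_step lerD2l lerN2.
Qed.

Lemma Qstar_sub_le (i : 'I_H) s a : Qs i s a - Q i s a <= Qpi P (err_ext y) pis i s a.
Proof. exact/Qstar_sub_le_step/Vstar_sub_le. Qed.

End ErrorPropagation.

Definition sigma_opt h s a := Pvar P h s a (Vpi P r pis h.+1).

Definition var_budget h s a := 2 * sigma_opt h s a + (8 * epsk k ^+ 2 + 8).

Lemma var_budget_ge0 h s a : (h < H)%N -> 0 <= var_budget h s a.
Proof.
move=> hH; have := Pvar_ge0 P_ge0 P_sum1 (s := s) (a := a) hH (Vpi P r pis h.+1).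
by rewrite /var_budget /sigma_opt; have := sqr_ge0 (epsk k); lra.
Qed.

Lemma var_est_le_budget y (i : 'I_H) s a : var_ok (i, s, a) (y (i, s, a)) ->
  y (i, s, a) + 4 * b <= var_budget i s a.
Proof.
rewrite /var_ok /= => /andP[_]; rewrite ler_norml => /andP[_ y_le].
set D := fun x => V0 i.+1 x - Vpi P r pis i.+1 x.
have split_var :=
  Pvar_le_split P_ge0 P_sum1 (s := s) (a := a) (ltn_ord i) (V0 i.+1) (Vpi P r pis i.+1).
have varD := Pvar_le_Pmean_sqr P (h := i) (s := s) (a := a) D.
have D2 : PM i s a (fun x => D x ^+ 2) <= 4 * epsk k ^+ 2.
  apply: (Pmean_le_cst P_ge0 P_sum1 (ltn_ord i)) => x; rewrite /D Vpi_pis.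
  have [V0_ge0 V0_Vs gap] := V0_bounds i.+1 x; have ek := epsk_gt0 k.
  rewrite -sqrrN opprB; move: V0_Vs gap; rewrite -subr_ge0.
  move: (Vs _ _ - V0 _ _) => d d0 d2; nra.
rewrite /var_budget /sigma_opt /QVI_b mulr1.
move: y_le split_var varD D2; rewrite -/D.
move: (y _) (Pvar _ _ _ _ (V0 _)) (Pvar _ _ _ _ (Vpi _ _ _ _)) (Pvar _ _ _ _ D) (PM _ _ _ _).
move=> ? ? ? ? ?.
lra.
Qed.

Lemma err_ext_le y h s a : (forall i, var_ok i (y i)) -> (h < H)%N ->
  err_ext y h s a <= 2 * gamma * Num.sqrt (var_budget h s a) + 2 * (c * epsk k / H%:R).
Proof.
move=> y_ok hH; rewrite -[h]/(Ordinal hH : nat) err_extE /err /eta lerD2r -mulrA.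
by rewrite ler_wpM2l ?ler_wpM2l ?ler_wsqrtr ?var_est_le_budget ?(ltW gamma_gt0).
Qed.

Lemma Qpi_err_le_epsk y : (forall i, var_ok i (y i)) ->
  forall (i : 'I_H) s a, Qpi P (err_ext y) pis i s a <= epsk k.
Proof.
move=> y_ok i s a; set m : R := (H - i)%:R.
have gamma0 : 0 <= 2 * gamma.
  by rewrite mulr_ge0 // ltW // gamma_gt0.
have err_le := Qpi_mono P_ge0 pis (fun h s a hH => err_ext_le s a y_ok hH) i s a.
rewrite (Qpi_affine P_sum1 pis _ _ (fun h s a => Num.sqrt (var_budget h s a))) in err_le.
have sqrt_le := Qpi_sqrt_le P_ge0 P_sum1 pis var_budget_ge0 i s a.
have budget_le : m * Qpi P var_budget pis i s a <= m * (2 * m ^+ 2 + (8 * epsk k ^+ 2 + 8) * m).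
  rewrite ler_wpM2l // (Qpi_affine P_sum1 pis 2 _ sigma_opt) lerD2r ler_wpM2l //.
  exact: (Qpi_var_le P_ge0 P_sum1 pis r01 i s a : Qpi P sigma_opt pis i s a <= m ^+ 2).
have m_range : 0 <= m <= H%:R by rewrite /m ler0n ler_nat leq_subr.
have := error_budget (ltW QVI_c_gt0) QVI_c_small H_ge1 m_range (epsk_gt0 k) eps_gt0
  (eps_le_2epsk k_lt_K) eps_le_sqrtH; rewrite -/gamma; apply: le_trans.
apply: le_trans err_le _; rewrite -/m lerD2r ler_wpM2l //.
by rewrite (le_trans sqrt_le) // ler_wsqrtr.
Qed.

Lemma iter_post_of_loop y V Q pi : (forall i, var_ok i (y i)) ->
  loop_inv y 0 (V, Q, pi) -> iter_post k (policy_of pi, V, Q).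
Proof.
move=> y_ok linv; have [V_beyond V_sub] := linv.
split=> [|i s a]; first split=> // i s.
  have [_ V_le _] := V_sub i s isT; rewrite policy_ofE epskS.
  split=> //; first exact: (loop_inv_V_ge0 linv).
  by apply: le_trans (Vstar_sub_le linv i s) _; rewrite VpiE Qpi_err_le_epsk.
have [_ _ Q_bounds] := V_sub i s isT; have [_ Q_le _] := Q_bounds a.
by split=> //; apply: le_trans (Qstar_sub_le linv i s a) _; apply: Qpi_err_le_epsk.
Qed.

Lemma var_est_ok i : 1 - (zeta + zeta) <= prob (var_est i) (var_ok i).
Proof.
have zeta01 := zeta_in01 i.1.2 i.2; have hH := ltn_ord i.1.1.
apply: (prob_dbind_ge (G := fun m2 =>
    `|m2 - PM i.1.1 i.1.2 i.2 (fun s' => V0 i.1.1.+1 s' ^+ 2)| < b)) => //.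
- exact: dvalid_est1.
- by move=> m2; apply: dvalid_dbind => [|m1]; [apply: dvalid_est1 | apply: dvalid_dret].
- exact: zeta_ge0.
- apply/ltW/spec1.2 => // s'.
  by have /andP[V0_ge0 V0_leH] := V0_range i.1.1.+1 s'; rewrite sqr_ge0 lerXn2r ?nnegrE.
move=> m2 m2_near.
apply: (prob_dbind_dret_ge (G := fun m1 => `|m1 - PM i.1.1 i.1.2 i.2 (V0 i.1.1.+1)| < b / H%:R)).
- exact: dvalid_est1.
- apply/ltW/spec1.2 => //; first exact: V0_range.
  by rewrite /QVI_b divr_gt0 ?ltr01 ?ltr0n ?H_gt0.
by move=> m1 m1_near; apply: var_ok_max_sub_sqr.
Qed.

Lemma mean_est_ok y i : var_ok i (y i) -> 1 - zeta <= prob (mean_est y i) (mean_ok y i).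
Proof.
case/andP=> y_ge0; rewrite ler_norml => /andP[var_le _].
have zeta01 := zeta_in01 i.1.2 i.2.
have sigma_pos : 0 < y i + 4 * b by rewrite /QVI_b; lra.
have sigma_gt0 : 0 < Num.sqrt (y i + 4 * b) by rewrite sqrtr_gt0.
apply: prob_shift_under; first exact: dvalid_est2.
apply: spec2.2 => //; first by rewrite sqr_sqrtr ?(ltW sigma_pos) // /QVI_b; lra.
by rewrite /eta mulr_gt0 ?gamma_gt0 // ltr_pM2r // gamma_lt4.
Qed.

Lemma corr_est_ok y V Q pi (hi : 'I_H) sa : loop_inv y hi.+1 (V, Q, pi) ->
  1 - zeta <= prob (corr_est V hi sa) (corr_ok V hi sa).
Proof.
move=> linv; have zeta01 := zeta_in01 sa.1 sa.2; have ek := epsk_gt0 k.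
apply: prob_shift_under; first exact: dvalid_est1.
apply: spec1.2 => // [s'|]; last first.
  by apply: divr_gt0; [apply: mulr_gt0 QVI_c_gt0 ek | rewrite ltr0n H_gt0].
have V0_V := loop_inv_V0_le linv s' (leqnn _).
have V_Vs := loop_inv_le_Vstar linv s' (leqnn _).
have [_ _ gap] := V0_bounds hi.+1 s'.
by rewrite subr_ge0 V0_V /= (le_trans _ gap) // lerD2r.
Qed.

Lemma backup_step_ok y x (hi : 'I_H) V Q pi :
  (forall i, mean_ok y i (x i)) -> loop_inv y hi.+1 (V, Q, pi) ->
  1 - #|{: S * A}|%:R * zeta <=
  prob (backup_step x hi (V, Q, pi)) (fun st => `[< loop_inv y hi st >]).
Proof.
move=> x_ok linv.
apply: (prob_dbind_dret_ge (G := fun g => [forall sa, corr_ok V hi sa (g sa)])).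
- exact: dvalid_drawall (dvalid_corr_est V hi).
- apply: (prob_drawall_ge (E := corr_ok V hi) (dvalid_corr_est V hi) zeta_ge0) => sa.
  exact: corr_est_ok linv.
by move=> g /forallP g_ok; apply/asboolP; apply: backup_loop_inv.
Qed.

Lemma backward_pass_ok y x : (forall i, mean_ok y i (x i)) ->
  forall n, (n <= H)%N ->
  1 - n%:R * (#|{: S * A}|%:R * zeta) <=
  prob (backward_pass x (drop (H - n) (enum 'I_H))) (fun st => `[< loop_inv y (H - n) st >]).
Proof.
move=> x_ok; elim=> [|n IH] nH.
  rewrite subn0 drop_oversize ?size_enum_ord // mul0r subr0 prob_dret.
  by rewrite asboolT //; split=> // i s; rewrite leqNgt ltn_ord.
have hn : (H - n.+1 < H)%N by rewrite -subn_gt0 subKn // ltnW.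
have hnS : (H - n.+1).+1 = (H - n)%N by rewrite -subSn // subSS.
rewrite (drop_nth (Ordinal hn)) ?size_enum_ord //.
have -> : nth (Ordinal hn) (enum 'I_H) (H - n.+1) = Ordinal hn.
  by apply: val_inj; rewrite /= nth_enum_ord.
rewrite /= hnS.
rewrite -natr1 mulrDl mul1r.
apply: (prob_dbind_ge (G := fun st => `[< loop_inv y (H - n) st >])).
- exact: dvalid_backward_pass.
- by move=> st; apply: dvalid_backup_step.
- by rewrite mulr_ge0 ?zeta_ge0.
- by apply: IH; apply: ltnW.
by move=> [[V Q] pi] /asboolP linv; apply: backup_step_ok => //=; rewrite hnS.
Qed.

Lemma iter_ok : 1 - (4 * H * #|S| * #|A|)%N%:R * zeta <=
  prob (QVI_iter r est1 est2 eps delta k pi0 V0) (fun o => `[< iter_post k o >]).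
Proof.
set N := #|{: 'I_H * S * A}|; set M := #|{: S * A}|.
have -> : 1 - (4 * H * #|S| * #|A|)%N%:R * zeta =
          1 - (N%:R * (zeta + zeta) + (N%:R * zeta + (H%:R * (M%:R * zeta) + 0))).
  by rewrite /N /M !card_prod card_ord !natrM; ring.
have z0 := zeta_ge0; have Nz0 : 0 <= N%:R * zeta := mulr_ge0 (ler0n _ _) z0.
have loop0 : 0 <= H%:R * (M%:R * zeta) + 0.
  by rewrite addr0; apply: mulr_ge0 (ler0n _ _) (mulr_ge0 (ler0n _ _) z0).
rewrite QVI_iterE.
apply: (prob_dbind_ge (G := fun y => [forall i, var_ok i (y i)])).
- exact: dvalid_drawall dvalid_var_est.
- move=> y; apply: dvalid_dbind => [|x]; first exact: dvalid_drawall (dvalid_mean_est y).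
  exact: dvalid_pass_output.
- exact: (addr_ge0 Nz0 loop0).
- exact: (prob_drawall_ge (E := var_ok) dvalid_var_est (addr_ge0 z0 z0) var_est_ok).
move=> y /forallP y_ok.
apply: (prob_dbind_ge (G := fun x => [forall i, mean_ok y i (x i)])).
- exact: dvalid_drawall (dvalid_mean_est y).
- exact: dvalid_pass_output.
- exact: loop0.
- apply: (prob_drawall_ge (E := mean_ok y) (dvalid_mean_est y) z0) => i.
  exact/mean_est_ok/y_ok.
move=> x /forallP x_ok.
apply: (prob_dbind_ge (G := fun st => `[< loop_inv y 0 st >])) => //.
- exact: dvalid_backward_pass.
- by move=> [[V Q] pi]; apply: dvalid_dret.
- by have := backward_pass_ok x_ok (leqnn H); rewrite subnn drop0.
move=> [[V Q] pi] /asboolP linv; rewrite prob_dret asboolT ?subr0 //.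
exact: iter_post_of_loop.
Qed.

End Iteration.
Local Notation iter_fail := ((4 * H * #|S| * #|A|)%N%:R * zeta).

Lemma iter_fail_ge0 : 0 <= iter_fail.
Proof. by rewrite mulr_ge0 ?zeta_ge0. Qed.

Lemma dvalid_QVI_run k : dvalid (QVI_run r est1 est2 eps delta piinit k).
Proof.
elim: k => [|k IH] /=; first exact: dvalid_dret.
by apply: dvalid_dbind => // -[[pi V] Q]; apply: dvalid_QVI_iter.
Qed.

Lemma QVI_run_inv k : (k <= K)%N ->
  1 - k%:R * iter_fail <=
  prob (QVI_run r est1 est2 eps delta piinit k) (fun o => `[< iter_inv k o.1.1 o.1.2 >]).
Proof.
elim: k => [|k IH] kK; first by rewrite mul0r subr0 prob_dret asboolT //; apply: iter_inv0.
rewrite -natr1 mulrDl mul1r.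
apply: (prob_dbind_ge (G := fun o => `[< iter_inv k o.1.1 o.1.2 >])) => //.
- exact: dvalid_QVI_run.
- by move=> [[pi V] Q]; apply: dvalid_QVI_iter.
- exact: iter_fail_ge0.
- exact/IH/ltnW.
move=> [[pi V] Q] /asboolP /= inv; apply: le_trans (iter_ok kK inv) _.
by apply: prob_mono => [|[[pi' V'] Q'] /asboolP [inv' _]]; [apply: dvalid_QVI_iter | apply/asboolP].
Qed.

Lemma QVI4_good : 1 - delta <= prob (QVI4 r est1 est2 eps delta piinit) (QVI_good P r eps).
Proof.
have fail_le : K%:R * iter_fail <= delta.
  have -> : K%:R * iter_fail = (4 * K * H * #|S| * #|A|)%N%:R * zeta by rewrite !natrM; ring.
  exact: zeta_union.
have K_pos : (0 < K)%N by rewrite /QVI_K addn1.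
rewrite /QVI4 -(prednK K_pos) /= in fail_le *.
apply: le_trans (_ : 1 - (K.-1%:R * iter_fail + iter_fail) <= _).
  by move: fail_le; rewrite -natr1 mulrDl mul1r; lra.
apply: (prob_dbind_ge (G := fun o => `[< iter_inv K.-1 o.1.1 o.1.2 >])) => //.
- exact: dvalid_QVI_run.
- by move=> [[pi V] Q]; apply: dvalid_QVI_iter.
- exact: iter_fail_ge0.
- exact/QVI_run_inv/leq_pred.
move=> [[pi V] Q] /asboolP /= inv.
apply: le_trans (iter_ok (_ : K.-1 < K)%N inv) _; first by rewrite ltn_predL.
apply: prob_mono => [|o /asboolP]; [exact: dvalid_QVI_iter | exact: QVI_good_of_post].
Qed.

End QVIAnalysis.

Theorem theorem4p5 (R : realType) (S A : finType) (H : nat)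
  (P : nat -> S -> A -> S -> R) (r : nat -> S -> A -> R)
  (est1 est2 : S -> A -> nat -> (S -> R) -> R -> R -> R -> dist R R)
  (eps delta : R) (piinit : policy S A H) :
  (forall h s a s', (h < H)%N -> 0 <= P h s a s') ->
  (forall h s a, (h < H)%N -> \sum_(s' : S) P h s a s' = 1) ->
  (forall h s a, (h < H)%N -> 0 <= r h s a <= 1) ->
  QME1_spec H P est1 -> QME2_spec H P est2 ->
  0 < eps -> eps <= Num.sqrt H%:R -> 0 < delta < 1 ->
  1 - delta <= prob (QVI4 r est1 est2 eps delta piinit) (QVI_good P r eps).
Proof.
move=> P_ge0 P_sum1 r01 spec1 spec2 eps_gt0 eps_le_sqrtH delta01.
exact: QVI4_good.
Qed.
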